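(* Let $N\ge1$ and let $W$ be the unitary on $\mathbb{C}^2\otimes\mathbb{C}^N$ given by the product (applied right to left) $$W=(H\otimes I_N)\,\check F_N^{2}\,(R\otimes I_N)\,\check F_N^{2}\,(I_2\otimes F_N)\,(H\otimes I_N),$$ where $\check F_N^2=I_N\oplus F_N^2$ is $F_N^2$ applied to the second register conditioned on the first (ancilla) qubit being $1$. Then for every vector $v\in\mathbb{C}^N$, $W(|0\rangle\otimes v)=|0\rangle\otimes A_N v$.
   Context: $F_N=\frac1{\sqrt N}[\omega^{jk}]_{j,k=0,\dots,N-1}$ with $\omega=e^{2\pi i/N}$ is the unitary discrete Fourier transform. The discrete Hartley transform is $A_N=\frac1{\sqrt N}[\mathrm{cas}(2\pi jk/N)]_{j,k=0,\dots,N-1}$ where $\mathrm{cas}(t)=\cos t+\sin t$. $H=\frac1{\sqrt2}\begin{pmatrix}1&1\\1&-1\end{pmatrix}$, $R=\frac12\begin{pmatrix}1-i&1+i\\1+i&1-i\end{pmatrix}$, $I_N$ the identity; $I_N\oplus F_N^2$ is block-diagonal in the basis $|0\rangle\otimes e_k,\ |1\rangle\otimes e_k$. *)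

From mathcomp Require Import all_boot all_order all_algebra.
From mathcomp Require Import complex.
From mathcomp Require Import reals trigo.
Set Implicit Arguments. Unset Strict Implicit. Unset Printing Implicit Defensive.
Import Order.TTheory GRing.Theory Num.Theory.
Local Open Scope ring_scope.

Section Defs.
Variable R : realType.
Local Notation C := R[i].

Definition cr (x : R) : C := Complex x 0.

Definition omega (N : nat) : C :=
  Complex (cos (2 * pi / N%:R)) (sin (2 * pi / N%:R)).

Definition DFT (N : nat) : 'M[C]_N :=
  \matrix_(j, k) ((cr (Num.sqrt N%:R))^-1 * omega N ^+ (j * k)%N).

Definition cas (t : R) : R := cos t + sin t.

Definition DHT (N : nat) : 'M[C]_N :=
  \matrix_(j, k)
     ((cr (Num.sqrt N%:R))^-1 * cr (cas (2 * pi * (j * k)%N%:R / N%:R))).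

Definition Hgate : 'M[C]_2 :=
  \matrix_(i < 2, j < 2)
    ((cr (Num.sqrt 2))^-1 * (if (i == 1%N :> nat) && (j == 1%N :> nat) then -1 else 1)).

Definition Rgate : 'M[C]_2 :=
  \matrix_(i < 2, j < 2)
    (if i == j :> nat then Complex (1 / 2) (- (1 / 2)) else Complex (1 / 2) (1 / 2)).

(* M (x) A on C^2 (x) C^N, ordered basis |0>(x)e_k (first block), |1>(x)e_k *)
Definition tens2 (N : nat) (M : 'M[C]_2) (A : 'M[C]_N) : 'M[C]_(N + N) :=
  block_mx (M 0 0 *: A) (M 0 1 *: A) (M 1 0 *: A) (M 1 1 *: A).

Definition ctrl (N : nat) (U : 'M[C]_N) : 'M[C]_(N + N) :=
  block_mx 1%:M 0 0 U.

Definition ket0 (N : nat) (v : 'cV[C]_N) : 'cV[C]_(N + N) := col_mx v 0.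

Definition Wcirc (N : nat) : 'M[C]_(N + N) :=
  tens2 Hgate 1%:M *m ctrl (DFT N *m DFT N) *m tens2 Rgate 1%:M
  *m ctrl (DFT N *m DFT N) *m tens2 1%:M (DFT N) *m tens2 Hgate 1%:M.

End Defs.

(* With F := F_N and G the same matrix built on omega^-1, orthogonality of the
   roots of unity gives F G = 1 and F^2 = G^2, hence F^3 = G; and
   cas t = cos t + sin t gives A_N = a F + b G with a = (1-i)/2, b = (1+i)/2,
   the entries of R.  In the circuit, H and F send |0>v to
   (|0>Fv + |1>Fv)/sqrt 2, the controlled F^2 turns the |1>-branch into G v,
   R mixes the branches into a F v + b G v and b F v + a G v, and the second
   controlled F^2 (which exchanges F v and G v) makes both branches equal to
   a F v + b G v, so the final H leaves only the |0>-branch. *)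

From mathcomp Require Import all_boot all_order all_algebra.
From mathcomp Require Import complex.
From mathcomp Require Import reals trigo.
From mathcomp Require Import ring lra.

Set Implicit Arguments. Unset Strict Implicit. Unset Printing Implicit Defensive.
Import Order.TTheory GRing.Theory Num.Theory.
Local Open Scope ring_scope.

Lemma sum_expr_unity_root (F : idomainType) n (z : F) : z ^+ n = 1 ->
  \sum_(l < n) z ^+ l = if z == 1 then n%:R else 0.
Proof.
move=> zn1; have [->|z_neq1] := eqVneq z 1.
  by rewrite (eq_bigr (fun _ => 1)) ?sumr_const ?card_ord // => l _; rewrite expr1n.
apply/eqP; have := subrX1 z n; rewrite zn1 subrr => /esym/eqP.
by rewrite mulf_eq0 subr_eq0 (negbTE z_neq1).
Qed.

Section RootOfUnity.
Variable R : realType.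

Lemma cos_sin_neq1 (x : R) : 0 < x < pi *+ 2 -> Complex (cos x) (sin x) != 1.
Proof.
case/andP=> x_gt0 x_lt2pi; apply/negP => /eqP[cos1 sin0].
case: (ltrgtP x pi) => [x_ltpi|x_gtpi|x_pi].
- by have := @sin_gt0_pi _ x; rewrite x_gt0 x_ltpi sin0 ltxx => /(_ isT).
- have : 0 < x - pi < pi by rewrite subr_gt0 x_gtpi ltrBlDr -mulr2n.
  have : sin x = - sin (x - pi) by rewrite -[in LHS](subrK pi x) sinDpi.
  rewrite sin0 => /eqP; rewrite eq_sym oppr_eq0 => /eqP sinB0.
  by move/sin_gt0_pi; rewrite sinB0 ltxx.
- by move: cos1; rewrite x_pi cospi; lra.
Qed.

Variable N : nat.
Local Notation t := (2 * pi / N%:R : R).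

Lemma omegaX m : omega R N ^+ m = Complex (cos (m%:R * t)) (sin (m%:R * t)).
Proof.
elim: m => [|m IH]; first by rewrite expr0 mul0r cos0 sin0.
rewrite exprS IH /omega -[m.+1]addn1 natrD; move: (2 * pi / N%:R) => t.
rewrite mulrDl mul1r addrC cosD sinD.
by apply/eqP; rewrite eq_complex /=; apply/andP; split; apply/eqP; ring.
Qed.

Hypothesis N_gt0 : (0 < N)%N.

Lemma omega_prim : N.-primitive_root (omega R N).
Proof.
have N_neq0 : N%:R != 0 :> R by rewrite pnatr_eq0 -lt0n.
apply/andP; split=> //; apply/forallP=> i; rewrite unity_rootE.
case: (ltngtP i.+1 N) => [lt_iN|/(leq_ltn_trans (ltn_ord i))|->]; last 2 first.
- by rewrite ltnn.
- by rewrite omegaX mulrCA mulfV // mulr1 mulr_natl cos2pi sin2pi eqxx.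
rewrite omegaX eqbF_neg; apply: cos_sin_neq1.
have -> : i.+1%:R * t = i.+1%:R / N%:R * pi *+ 2 by rewrite mulr2n; ring.
rewrite pmulrn_lgt0 ?mulr_gt0 ?invr_gt0 ?pi_gt0 ?ltr0n //= ltrMn2r /=.
by rewrite gtr_pMl ?pi_gt0 // ltr_pdivrMr ?ltr0n // mul1r ltr_nat.
Qed.

End RootOfUnity.

Lemma invsqrt_sqr_natr (R : realType) n : (0 < n)%N ->
  (cr (Num.sqrt n%:R : R))^-1 ^+ 2 * n%:R = 1.
Proof.
move=> n_gt0; rewrite -[cr _]/(real_complex R (Num.sqrt n%:R)).
rewrite exprVn -rmorphXn sqr_sqrtr ?ler0n //.
by rewrite -(rmorph_nat (real_complex R)) mulVf // (inj_eq (@complexI _)) pnatr_eq0 -lt0n.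
Qed.

Lemma cos_sin_inv (R : realType) (x : R) :
  (Complex (cos x) (sin x))^-1 = Complex (cos x) (- sin x).
Proof.
apply: mulr1_eq; apply/eqP; rewrite eq_complex /=; apply/andP; split; apply/eqP.
  by rewrite -(cos2Dsin2 x); ring.
by ring.
Qed.

Lemma matrix_lin2 (K : pzRingType) m n (a b : K) (f g : 'I_m -> 'I_n -> K) :
  \matrix_(i, j) (a * f i j + b * g i j) =
  a *: \matrix_(i, j) f i j + b *: \matrix_(i, j) g i j.
Proof. by apply/matrixP => i j; rewrite !mxE. Qed.

Section Fourier.
Variable R : realType.
Local Notation C := R[i].
Variable N : nat.
Hypothesis N_gt0 : (0 < N)%N.
Local Notation w := (omega R N).

Definition fourier_mx (u : C) : 'M[C]_N :=
  \matrix_(j, k) ((cr (Num.sqrt N%:R))^-1 * u ^+ (j * k)).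

Definition iDFT : 'M[C]_N := fourier_mx w^-1.

Lemma fourier_mx_mulE u v : u ^+ N = 1 -> v ^+ N = 1 ->
  fourier_mx u *m fourier_mx v = \matrix_(j, k) (u ^+ j * v ^+ k == 1)%:R.
Proof.
move=> uN vN; apply/matrixP => j k; rewrite !mxE.
under eq_bigr => l _ do rewrite !mxE mulrACA -expr2 (mulnC l k) !exprM -exprMn.
rewrite -big_distrr /= sum_expr_unity_root; last first.
  by rewrite exprMn -!exprM !(mulnC _ N) !exprM uN vN !expr1n mulr1.
by case: (_ == 1); rewrite ?mulr0 // invsqrt_sqr_natr.
Qed.

Let w_prim : N.-primitive_root w := omega_prim R N_gt0.
Let wN : w ^+ N = 1 := prim_expr_order w_prim.
Let winvN : w^-1 ^+ N = 1. Proof. by rewrite exprVn wN invr1. Qed.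

Lemma DFT_fourier : DFT R N = fourier_mx w. Proof. by []. Qed.

Lemma DFT_mul_iDFT : DFT R N *m iDFT = 1%:M.
Proof.
rewrite (fourier_mx_mulE wN winvN); apply/matrixP => j k; rewrite !mxE exprVn.
have wk_neq0 : w ^+ k != 0 by rewrite expf_neq0 // (prim_root_eq0 w_prim) -lt0n.
rewrite (can2_eq (divfK wk_neq0) (mulfK wk_neq0)) mul1r.
by rewrite (eq_prim_root_expr w_prim) !modn_small.
Qed.

Lemma DFT_sqr : DFT R N *m DFT R N = iDFT *m iDFT.
Proof.
rewrite DFT_fourier (fourier_mx_mulE wN wN) (fourier_mx_mulE winvN winvN).
apply: eq_mx => j k.
by rewrite !exprVn -invfM invr_eq1.
Qed.

Lemma DFT_cube : DFT R N *m DFT R N *m DFT R N = iDFT.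
Proof. by rewrite -mulmxA DFT_sqr mulmxA DFT_mul_iDFT mul1mx. Qed.

Lemma DHT_DFT :
  DHT R N = Complex (1/2) (- (1/2)) *: DFT R N + Complex (1/2) (1/2) *: iDFT.
Proof.
rewrite DFT_fourier /iDFT /fourier_mx -matrix_lin2; apply: eq_mx => j k.
rewrite exprVn omegaX cos_sin_inv /cas.
have -> : (j * k)%N%:R * (2 * pi / N%:R) = 2 * pi * (j * k)%N%:R / N%:R :> R by ring.
rewrite !(mulrCA _ (_^-1)) -mulrDr; congr (_ * _).
by apply/eqP; rewrite eq_complex /=; apply/andP; split; apply/eqP; lra.
Qed.

End Fourier.
Section Circuit.
Variables (R : realType) (N : nat).
Local Notation C := R[i].

Lemma tens2_col (M : 'M[C]_2) (A : 'M[C]_N) (x y : 'cV[C]_N) :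
  tens2 M A *m col_mx x y =
  col_mx (M 0 0 *: (A *m x) + M 0 1 *: (A *m y)) (M 1 0 *: (A *m x) + M 1 1 *: (A *m y)).
Proof. by rewrite /tens2 mul_block_col -!scalemxAl. Qed.

Lemma ctrl_col (U : 'M[C]_N) (x y : 'cV[C]_N) :
  ctrl U *m col_mx x y = col_mx x (U *m y).
Proof. by rewrite /ctrl mul_block_col mul1mx !mul0mx addr0 add0r. Qed.

Local Notation h := (cr (Num.sqrt 2 : R))^-1.
Local Notation a := (Complex (1/2) (- (1/2)) : C).
Local Notation b := (Complex (1/2) (1/2) : C).

Lemma tensH_col (x y : 'cV[C]_N) :
  tens2 (Hgate R) 1%:M *m col_mx x y = col_mx (h *: (x + y)) (h *: (x - y)).
Proof.
rewrite tens2_col !mul1mx !mxE /= !mulr1 mulrN1.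
by rewrite scalerDr scalerBr scaleNr.
Qed.

Lemma tensR_col (x y : 'cV[C]_N) :
  tens2 (Rgate R) 1%:M *m col_mx x y = col_mx (a *: x + b *: y) (b *: x + a *: y).
Proof. by rewrite tens2_col !mul1mx !mxE. Qed.

Lemma tensI_col (A : 'M[C]_N) (x y : 'cV[C]_N) :
  tens2 1%:M A *m col_mx x y = col_mx (A *m x) (A *m y).
Proof. by rewrite tens2_col !mxE /= !scale1r !scale0r addr0 add0r. Qed.

Hypothesis N_gt0 : (0 < N)%N.

Lemma Wcirc_ket0 (v : 'cV[C]_N) :
  Wcirc R N *m ket0 v = ket0 ((a *: DFT R N + b *: iDFT R N) *m v).
Proof.
have FFF := DFT_cube R N_gt0.
have FFG : DFT R N *m DFT R N *m iDFT R N = DFT R N.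
  by rewrite -mulmxA (DFT_mul_iDFT R N_gt0) mulmx1.
rewrite /Wcirc /ket0 -!mulmxA.
(* Abstracting the concrete matrices stops rewriting from unfolding them
   while matching, which is prohibitively slow. *)
move: (DFT R N) (iDFT R N) FFF FFG => F G FFF FFG.
have -> : tens2 1%:M F *m (tens2 (Hgate R) 1%:M *m col_mx v 0) =
          col_mx (h *: (F *m v)) (h *: (F *m v)).
  by rewrite tensH_col addr0 subr0 tensI_col -scalemxAr.
have Px : F *m F *m (F *m v) = G *m v by rewrite mulmxA FFF.
have Py : F *m F *m (G *m v) = F *m v by rewrite mulmxA FFG.
rewrite mulmxDl -!scalemxAl.
move: (F *m F) (F *m v) (G *m v) Px Py => P x y Px Py.
rewrite ctrl_col -scalemxAr Px tensR_col ctrl_col mulmxDr -!scalemxAr Px Py.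
rewrite tensH_col [b *: _ + _]addrC subrr scaler0; congr col_mx.
have hh : h * (h + h) = 1.
  by rewrite -mulr2n mulrnAr -expr2 -mulr_natr invsqrt_sqr_natr.
apply/matrixP => i j; rewrite !mxE.
by transitivity (h * (h + h) * (a * x i j + b * y i j)); [ring | rewrite hh mul1r].
Qed.

End Circuit.

Theorem mainTheorem6 (R : realType) (N : nat) (hN : (1 <= N)%N)
  (v : 'cV[R[i]]_N) :
  Wcirc R N *m ket0 v = ket0 (DHT R N *m v).
Proof. by rewrite (Wcirc_ket0 hN) DHT_DFT. Qed.
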